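(* Let $\Omega\subseteq\mathbb{R}^2$ be a bounded, simply connected domain of class $C^1$, let $a_1,\ldots,a_p$ be distinct points in $\Omega$, and let $\{L_1,\ldots,L_q\}$ be a minimal connection for $\{a_1,\ldots,a_p\}$ relative to $\Omega$. Then the segments $L_j$ are pairwise disjoint; for each index $i$ with $a_i\in\Omega$ there is exactly one index $j$ such that $a_i$ is an endpoint of $L_j$; and for each $j$ the intersection $L_j\cap\partial\Omega$ is either empty or an endpoint of $L_j$.
   Context: A connection for $\{a_1,\ldots,a_p\}$ relative to $\Omega$ is a finite collection $\{L_1,\ldots,L_q\}$ of closed non-degenerate straight line segments such that (i) each $L_j\subseteq\overline\Omega$; (ii) each $L_j$ either connects two of $a_1,\ldots,a_p$ or connects some $a_i$ with a point of $\partial\Omega$; (iii) each $a_i$ is an endpoint of an odd number of the $L_j$. A minimal connection relative to $\Omega$ is one minimising $\sum_j\mathcal{H}^1(L_j)$ among all connections relative to $\Omega$. *)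

(* R : realType, points of the plane are pairs R * R
   (product topology = Euclidean topology). *)
From HB Require Import structures.
From mathcomp Require Import all_boot all_order all_algebra.
From mathcomp Require Import all_classical all_reals all_analysis.
Set Implicit Arguments. Unset Strict Implicit. Unset Printing Implicit Defensive.
Import Order.TTheory GRing.Theory Num.Theory numFieldNormedType.Exports.
Local Open Scope classical_set_scope.
Local Open Scope ring_scope.

Section Plane.
Variable R : realType.
Local Notation P := (R * R)%type.

Definition edist (x y : P) : R := Num.sqrt ((x.1 - y.1) ^+ 2 + (x.2 - y.2) ^+ 2).

Definition bdry (A : set P) : set P := closure A `\` interior A.

Definition bounded_plane (A : set P) : Prop :=
  exists M : R, forall y, A y -> edist y (0, 0) <= M.

Definition unit_square : set P := [set st | 0 <= st.1 <= 1 /\ 0 <= st.2 <= 1].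

Definition simply_connected (A : set P) : Prop :=
  connected A /\
  forall gam : R -> P,
    {within `[0, 1], continuous gam} ->
    gam 0 = gam 1 ->
    (forall t, 0 <= t <= 1 -> A (gam t)) ->
    exists (H : P -> P) (c : P),
      {within unit_square, continuous H} /\
      (forall st, unit_square st -> A (H st)) /\
      (forall t, 0 <= t <= 1 -> H (0, t) = gam t) /\
      (forall t, 0 <= t <= 1 -> H (1, t) = c) /\
      (forall s, 0 <= s <= 1 -> H (s, 0) = H (s, 1)).

Definition C1fun (g : R -> R) : Prop :=
  (forall x, derivable g x 1) /\ continuous (derive1 g).

(* bounded domain of class C^1: open, and near each boundary point x0,
   after a rotation (matrix [[c, s], [-s, c]], c^2 + s^2 = 1) centered at x0,
   Omega is the supergraph of a C^1 function *)
Definition C1_domain (O : set P) : Prop :=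
  open O /\
  forall x0, bdry O x0 ->
    exists (r : R) (c s : R) (g : R -> R),
      0 < r /\ c ^+ 2 + s ^+ 2 = 1 /\ C1fun g /\
      forall y, edist y x0 < r ->
        (O y <->
         let u1 := c * (y.1 - x0.1) + s * (y.2 - x0.2) in
         let u2 := - s * (y.1 - x0.1) + c * (y.2 - x0.2) in
         g u1 < u2).

Definition seg (e : P * P) : set P :=
  [set z | exists t : R, 0 <= t <= 1 /\
     z = ((1 - t) * e.1.1 + t * e.2.1, (1 - t) * e.1.2 + t * e.2.2)].

Definition connects (e : P * P) (x y : P) : Prop :=
  e = (x, y) \/ e = (y, x).

Definition is_endpoint (x : P) (e : P * P) : bool := (e.1 == x) || (e.2 == x).

(* {L_j : j < q} (each segment given by its two endpoints) is a connection
   for {a_i : i < p} relative to O *)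
Definition is_connection (O : set P) (p : nat) (a : 'I_p -> P)
    (q : nat) (L : 'I_q -> P * P) : Prop :=
  (forall j, (L j).1 <> (L j).2) /\
  (forall j k, j <> k -> seg (L j) <> seg (L k)) /\
  (forall j, seg (L j) `<=` closure O) /\
  (forall j,
     (exists i k, i <> k /\ connects (L j) (a i) (a k)) \/
     (exists i b, bdry O b /\ connects (L j) (a i) b)) /\
  (forall i, odd #|[set j : 'I_q | is_endpoint (a i) (L j)]|).

Definition total_length (q : nat) (L : 'I_q -> P * P) : R :=
  \sum_(j < q) edist (L j).1 (L j).2.

Definition is_minimal_connection (O : set P) (p : nat) (a : 'I_p -> P)
    (q : nat) (L : 'I_q -> P * P) : Prop :=
  is_connection O a L /\
  forall (q' : nat) (L' : 'I_q' -> P * P),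
    is_connection O a L' -> total_length L <= total_length L'.

End Plane.

(* Minimality is exploited through exchange arguments. Replacing some segments of L
   by admissible segments with the same parity at every a_i never shortens it, since
   repeated segments cancel in pairs and what remains is again a connection; between
   two terminals (points a_i or boundary points) such a replacement no longer than
   their distance always exists, stopping at the boundary wherever the straight segment
   leaves the closed domain.
   Exchanging the far ends of two segments through a common point z puts z on all four
   crossed segments, so z is an endpoint of both and their other endpoints are aligned
   with z. If z = a_i, parity yields a third segment at z, impossible for three
   segments pairwise aligned through z. If z is on the boundary, the other endpoints are
   points a_i and the open balls centred at them through z lie in the domain (otherwise
   a detour through the boundary is shorter); two balls touching at z from opposite
   sides leave no room near z for the complement, the subgraph of a function
   differentiable at z. The same two arguments rule out boundary points inside a
   segment. *)

From Pilot Require Import Defs.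
From HB Require Import structures.
From mathcomp Require Import all_boot all_order all_algebra.
From mathcomp Require Import all_classical all_reals all_analysis.
From mathcomp Require Import ring lra.
Import Order.TTheory GRing.Theory Num.Theory numFieldNormedType.Exports.
Local Open Scope classical_set_scope.
Local Open Scope ring_scope.

Lemma card_set_count (T : finType) (f : pred T) : #|[set x | f x]| = count f (index_enum T).
Proof. by rewrite -sum1_card sum1_count; apply: eq_count => x; apply/asboolP/idP. Qed.

Lemma count_sum (T : Type) (f : pred T) (s : seq T) : count f s = (\sum_(x <- s) f x)%N.
Proof. by rewrite -sum1_count big_mkcond; apply: eq_bigr => x _; case: (f x). Qed.

Section PlaneGeometry.
Context {R : realType}.
Local Notation P := (R * R)%type.
Local Notation edist := (@Defs.edist R).
Local Notation seg := (@Defs.seg R).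

Lemma dot_le_norms {u1 u2 v1 v2 a b : R} : 0 <= a -> 0 <= b ->
  a ^+ 2 = u1 ^+ 2 + u2 ^+ 2 -> b ^+ 2 = v1 ^+ 2 + v2 ^+ 2 ->
  u1 * v1 + u2 * v2 <= a * b.
Proof.
move=> a0 b0 ea eb.
have lagrange : (a * b) ^+ 2 - (u1 * v1 + u2 * v2) ^+ 2 = (u1 * v2 - u2 * v1) ^+ 2.
  by rewrite exprMn ea eb; ring.
have := sqr_ge0 (u1 * v2 - u2 * v1); rewrite -lagrange.
have : 0 <= a * b by rewrite mulr_ge0.
rewrite !expr2; nra.
Qed.

Lemma dot_eq_norms {u1 u2 v1 v2 a b : R} :
  a ^+ 2 = u1 ^+ 2 + u2 ^+ 2 -> b ^+ 2 = v1 ^+ 2 + v2 ^+ 2 ->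
  u1 * v1 + u2 * v2 = a * b -> b * u1 = a * v1 /\ b * u2 = a * v2.
Proof.
move=> ea eb e.
have : (b * u1 - a * v1) ^+ 2 + (b * u2 - a * v2) ^+ 2 = 0.
  transitivity (b ^+ 2 * (u1 ^+ 2 + u2 ^+ 2) + a ^+ 2 * (v1 ^+ 2 + v2 ^+ 2)
                - 2 * a * b * (u1 * v1 + u2 * v2)); first by ring.
  by rewrite -ea -eb e; ring.
move/eqP; rewrite paddr_eq0 ?sqr_ge0 // !sqrf_eq0 !subr_eq0.
by case/andP => /eqP -> /eqP ->.
Qed.

Lemma apex_coord (u v w t s s' : R) : 0 < t < 1 -> 0 < s <= 1 -> 0 < s' <= 1 ->
  (1 - t) * u + t * v = 0 -> (1 - s) * u + s * w = 0 -> (1 - s') * v + s' * w = 0 -> w = 0.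
Proof.
move=> /andP[t0 t1] /andP[s0 s1] /andP[s'0 s'1] e1 e2 e3.
have euw : (1 - s) * (u * u) + s * (u * w) = 0 by rewrite -(mulr0 u) -e2; ring.
have evw : (1 - s') * (v * v) + s' * (v * w) = 0 by rewrite -(mulr0 v) -e3; ring.
have ew : (1 - t) * (u * w) + t * (v * w) = 0 by rewrite -(mul0r w) -e1; ring.
have uw : u * w <= 0 by nra.
have vw : v * w <= 0 by nra.
have uw0 : u * w = 0 by nra.
have : (1 - s) * (u * w) + s * (w * w) = 0 by rewrite -(mul0r w) -e2; ring.
by rewrite uw0 mulr0 add0r => /eqP; rewrite mulf_eq0 gt_eqF //= mulf_eq0 orbb => /eqP.
Qed.

Definition lerp (x y : P) (t : R) : P :=
  ((1 - t) * x.1 + t * y.1, (1 - t) * x.2 + t * y.2).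

Definition sqdist (x y : P) : R := (x.1 - y.1) ^+ 2 + (x.2 - y.2) ^+ 2.

Lemma sqdist_ge0 x y : 0 <= sqdist x y.
Proof. by rewrite addr_ge0 ?sqr_ge0. Qed.

Lemma edist_ge0 x y : 0 <= edist x y.
Proof. exact: sqrtr_ge0. Qed.

Lemma sqr_edist x y : edist x y ^+ 2 = sqdist x y.
Proof. by rewrite sqr_sqrtr ?sqdist_ge0. Qed.

Lemma edistC x y : edist x y = edist y x.
Proof. by rewrite /edist; congr Num.sqrt; ring. Qed.

Lemma edistxx x : edist x x = 0.
Proof. by rewrite /edist !subrr expr0n addr0 sqrtr0. Qed.

Lemma edist_eq0 {x y} : edist x y = 0 -> x = y.
Proof.
move=> /eqP; rewrite sqrtr_eq0 => /(conj (sqdist_ge0 x y)) /andP.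
rewrite -eq_le eq_sym /sqdist; case: x y => x1 x2 [y1 y2] /=.
by rewrite paddr_eq0 ?sqr_ge0 // !sqrf_eq0 !subr_eq0 => /andP[/eqP -> /eqP ->].
Qed.

Lemma edist_gt0 {x y} : x <> y -> 0 < edist x y.
Proof. by move=> nxy; rewrite lt_def edist_ge0 andbT; apply/eqP => /edist_eq0. Qed.

Lemma edist_lerpl x y t : 0 <= t -> edist x (lerp x y t) = t * edist x y.
Proof.
move=> t0; rewrite /edist -[t in RHS]ger0_norm // -sqrtr_sqr -sqrtrM ?sqr_ge0 //.
by congr Num.sqrt; rewrite /lerp /=; ring.
Qed.

Lemma edist_lerpr x y t : t <= 1 -> edist (lerp x y t) y = (1 - t) * edist x y.
Proof.
move=> t1; rewrite /edist -[1 - t]ger0_norm ?subr_ge0 // -sqrtr_sqr -sqrtrM ?sqr_ge0 //.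
by congr Num.sqrt; rewrite /lerp /=; ring.
Qed.

Lemma segP x y z : seg (x, y) z <-> exists2 t, 0 <= t <= 1 & z = lerp x y t.
Proof. by split => -[t]; [case=> ? ?|move=> ? ?]; exists t. Qed.

Lemma lerp0 x y : lerp x y 0 = x.
Proof. by rewrite /lerp subr0 !mul1r !mul0r !addr0; case: x. Qed.

Lemma lerp1 x y : lerp x y 1 = y.
Proof. by rewrite /lerp subrr !mul1r !mul0r !add0r; case: y. Qed.

Lemma lerpC x y t : lerp y x t = lerp x y (1 - t).
Proof. by rewrite /lerp; congr (_, _); ring. Qed.

Lemma lerp_lerp x y s s' t :
  lerp (lerp x y s) (lerp x y s') t = lerp x y ((1 - t) * s + t * s').
Proof. by rewrite /lerp /=; congr (_, _); ring. Qed.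

Lemma seg_beg x y : seg (x, y) x.
Proof. by apply/segP; exists 0; rewrite ?lerp0 // lexx ler01. Qed.

Lemma seg_end x y : seg (x, y) y.
Proof. by apply/segP; exists 1; rewrite ?lerp1 // lexx ler01. Qed.

Lemma segC x y : seg (x, y) = seg (y, x).
Proof.
apply/seteqP; split=> z /segP[t /andP[t0 t1] ->]; apply/segP;
  by exists (1 - t); [rewrite subr_ge0 t1 gerBl | rewrite lerpC].
Qed.

Lemma seg_inner {x y z} : seg (x, y) z -> z <> x -> z <> y ->
  exists2 t, 0 < t < 1 & z = lerp x y t.
Proof.
move=> /segP[t /andP[t0 t1] ->] zx zy; exists t => //.
by rewrite !lt_def t0 t1 !andbT; apply/andP; split; apply/eqP => et;
  [apply: zx; rewrite et lerp0 | apply: zy; rewrite -et lerp1].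
Qed.

Lemma seg_edistD {x y z} : seg (x, y) z -> edist x z + edist z y = edist x y.
Proof. by case/segP=> t /andP[t0 t1] ->; rewrite edist_lerpl // edist_lerpr //; ring. Qed.

Lemma seg_edist_le {x y z} : seg (x, y) z -> edist x z <= edist x y.
Proof. by move/seg_edistD <-; rewrite lerDl edist_ge0. Qed.

Lemma edist_triangle x y z : edist x y <= edist x z + edist z y.
Proof.
rewrite -[_ + _]ger0_norm ?addr_ge0 ?edist_ge0 // -sqrtr_sqr ler_sqrt ?sqr_ge0 //.
have := dot_le_norms (edist_ge0 x z) (edist_ge0 z y) (sqr_edist x z) (sqr_edist z y).
move=> dot; rewrite [X in _ <= X]sqrrD !sqr_edist /sqdist; nra.
Qed.

Lemma edist_triangle_eq x y z :
  edist x y = edist x z + edist z y -> seg (x, y) z.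
Proof.
set a := edist x z; set b := edist z y => exyz.
have [a0 b0] : 0 <= a /\ 0 <= b by rewrite !edist_ge0.
have dot : (x.1 - z.1) * (z.1 - y.1) + (x.2 - z.2) * (z.2 - y.2) = a * b.
  have := sqr_edist x y; rewrite exyz sqrrD !sqr_edist /sqdist -/a -/b.
  have := sqr_edist x z; have := sqr_edist z y; rewrite /sqdist -/a -/b; nra.
have [e1 e2] := dot_eq_norms (sqr_edist x z) (sqr_edist z y) dot.
rewrite -/a -/b in e1 e2.
have [ab0|ab_gt0] := eqVneq (a + b) 0.
  have a00 : a = 0 by lra.
  by rewrite (edist_eq0 a00); apply: seg_beg.
have ab_pos : 0 < a + b by rewrite lt_def ab_gt0 addr_ge0.
have tE : (a + b) * (a / (a + b)) = a by rewrite mulrCA divff ?mulr1 ?lt0r_neq0.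
apply/segP; exists (a / (a + b)).
  by rewrite divr_ge0 ?addr_ge0 //= ler_pdivrMr // mul1r lerDl.
move: tE; set t := a / (a + b) => tE; clearbody t.
by apply/injective_projections => /=; apply: (mulfI (lt0r_neq0 ab_pos));
  rewrite mulrDr !mulrA mulrBr mulr1 tE; lra.
Qed.

Lemma seg_extreme {x y x' y'} : x <> y -> x' <> y' ->
  seg (x', y') x -> seg (x, y) x' -> seg (x, y) y' -> x = x' \/ x = y'.
Proof.
move=> nxy nxy' /segP[t /andP[t0 t1] ex] /segP[al /andP[al0 al1] ex'].
move=> /segP[be /andP[be0 be1] ey'].
have : edist x (lerp x y ((1 - t) * al + t * be)) = 0.
  by rewrite -lerp_lerp -ex' -ey' -ex edistxx.
rewrite edist_lerpl ?addr_ge0 ?mulr_ge0 ?subr_ge0 //.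
move/eqP; rewrite mulf_eq0 (gt_eqF (edist_gt0 nxy)) orbF paddr_eq0 ?mulr_ge0 ?subr_ge0 //.
rewrite !mulf_eq0 subr_eq0 => /andP[/orP[/eqP t_1|/eqP al_0] /orP[/eqP t_0|/eqP be_0]].
- by move: t_1; rewrite t_0 => /eqP; rewrite oner_eq0.
- by right; rewrite ex -t_1 lerp1.
- by left; rewrite ex t_0 lerp0.
- by case: nxy'; rewrite ex' ey' al_0 be_0.
Qed.

Lemma eq_seg_is_endpoint {e e'} w : e.1 <> e.2 -> e'.1 <> e'.2 -> seg e = seg e' ->
  is_endpoint w e = is_endpoint w e'.
Proof.
case: e e' => x y [x' y'] /= nxy nxy' see'.
have end_of u v : u <> v -> seg (u, v) = seg (x', y') -> u = x' \/ u = y'.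
  move=> nuv suv; apply: (seg_extreme nuv nxy');
    by [rewrite -suv; apply: seg_beg | rewrite suv; apply: seg_beg | rewrite suv; apply: seg_end].
have [ex|ex] := end_of x y nxy see'; have [ey|ey] := end_of y x (nesym nxy) (etrans (segC y x) see');
  rewrite /is_endpoint /= ex ey //; first [by case: nxy; rewrite ex ey | exact: orbC].
Qed.

Lemma seg_off_beg {x y z} : seg (x, y) z -> z <> x -> exists2 s, 0 < s <= 1 & z = lerp x y s.
Proof.
move=> /segP[s /andP[s0 s1] ->] zx; exists s => //.
by rewrite s1 lt_def s0 !andbT; apply/eqP => es; apply: zx; rewrite es lerp0.
Qed.

Lemma seg_inner_apex {p q r z} : seg (p, q) z -> z <> p -> z <> q ->
  seg (p, r) z -> seg (q, r) z -> r = z.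
Proof.
move=> spq zp zq /seg_off_beg /(_ zp)[s s01 es] /seg_off_beg /(_ zq)[s' s'01 es'].
have [t t01 et] := seg_inner spq zp zq.
apply/injective_projections; apply/eqP; rewrite -subr_eq0; apply/eqP.
- apply: (@apex_coord (p.1 - z.1) (q.1 - z.1) _ t s s') => //;
    [rewrite et | rewrite es | rewrite es']; rewrite /lerp /=; ring.
- apply: (@apex_coord (p.2 - z.2) (q.2 - z.2) _ t s s') => //;
    [rewrite et | rewrite es | rewrite es']; rewrite /lerp /=; ring.
Qed.

Lemma lerp_continuous x y : continuous (lerp x y).
Proof.
have coord (a b : R) : continuous (fun t : R => (1 - t) * a + t * b).
  by move=> t; apply: cvgD; [apply: cvgMr_tmp; apply: cvgB|apply: cvgMr_tmp];
    by [apply: cvg_cst|apply: cvg_id].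
by move=> t; apply: (@cvg_pair _ _ _ _ (nbhs _) (nbhs _)); apply: coord.
Qed.

Lemma open_bdry_notin {O : set P} {z} : open O -> bdry O z -> ~ O z.
Proof. by move=> oO [_ nint] Oz; apply: nint; apply: oO. Qed.

Lemma first_exit_time {O : set P} {f : R -> P} : open O -> continuous f ->
  O (f 0) -> ~ O (f 1) ->
  exists T, [/\ 0 < T <= 1, forall s, 0 <= s < T -> O (f s), ~ O (f T) & closure O (f T)].
Proof.
move=> oO f_cont O0 nO1.
have preim_nbhs (N : set P) t : nbhs (f t) N -> exists2 d, 0 < d & forall s, `|t - s| < d -> N (f s).
  by move=> /(f_cont t) /nbhs_ballP[d d0 dN]; exists d.
pose S := [set t : R | 0 <= t /\ forall s, 0 <= s <= t -> O (f s)].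
have S_le1 t : S t -> t <= 1.
  by case=> t0 St; rewrite leNgt; apply/negP => t1; apply/nO1/St; rewrite ler01 ltW.
have S0 : S 0.
  by split=> // s /andP[s0 s_le0]; have -> : s = 0 by apply/le_anti; rewrite s_le0 s0.
have supS : has_sup S by split; [exists 0 | exists 1 => t /S_le1].
set T := sup S; exists T.
have T0 : 0 <= T by apply: sup_upper_bound.
have below s : 0 <= s < T -> O (f s).
  case/andP=> s0 sT; have Ts_gt0 : 0 < T - s by rewrite subr_gt0.
  have [t [_ St] ts] := sup_adherent Ts_gt0 supS.
  by apply: St; rewrite s0 /=; move: ts; rewrite -/T; lra.
have notOT : ~ O (f T).
  move=> /(oO (f T)) /preim_nbhs [d d0 dO].
  suff /(sup_upper_bound supS) : S (T + d / 2) by rewrite -/T; lra.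
  split=> [|s /andP[s0 sT]]; first lra.
  have [|Ts] := ltP s T; first by move=> sT'; apply: below; rewrite s0.
  by apply: dO; rewrite ler0_norm ?subr_le0 //; lra.
have T_gt0 : 0 < T by rewrite lt_def T0 andbT; apply: contra_notN notOT => /eqP ->.
split=> //; first by rewrite T_gt0; apply: ge_sup; [exists 0 | move=> t /S_le1].
move=> N /preim_nbhs [d d0 dN]; set s := T - Num.min T d / 2.
have [mT md] : Num.min T d <= T /\ Num.min T d <= d by split; rewrite ge_min lexx ?orbT.
have m0 : 0 < Num.min T d by rewrite lt_min T_gt0.
exists (f s); split; first by apply: below; rewrite /s; apply/andP; split; lra.
by apply: dN; rewrite /s ger0_norm; lra.
Qed.

Lemma seg_exit {O : set P} {x w} : open O -> O x -> ~ O w ->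
  exists c, [/\ bdry O c, seg (x, w) c & seg (x, c) `<=` closure O].
Proof.
move=> oO Ox nOw; have O0 : O (lerp x w 0) by rewrite lerp0.
have nO1 : ~ O (lerp x w 1) by rewrite lerp1.
have [T [/andP[T0 T1] below notOT clT]] := first_exit_time oO (lerp_continuous x w) O0 nO1.
exists (lerp x w T); split.
- by split=> // /interior_subset.
- by apply/segP; exists T; rewrite // (ltW T0) T1.
- move=> y /segP[tau /andP[tau0 tau1] ->].
  rewrite -{1}(lerp0 x w) lerp_lerp mulr0 add0r.
  have [lt|ge] := ltP (tau * T) T; first by apply/subset_closure/below; rewrite lt mulr_ge0 // ltW.
  by have -> : tau * T = T by apply/le_anti; rewrite ge ler_piMl // ltW.
Qed.

End PlaneGeometry.

Section SegmentLists.
Context {R : realType}.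
Local Notation P := (R * R)%type.
Local Notation edist := (@Defs.edist R).
Local Notation seg := (@Defs.seg R).

Definition seq_length (E : seq (P * P)) : R := \sum_(e <- E) edist e.1 e.2.

Lemma seq_length1 e : seq_length [:: e] = edist e.1 e.2.
Proof. by rewrite /seq_length big_seq1. Qed.

Lemma seq_length_cons e E : seq_length (e :: E) = edist e.1 e.2 + seq_length E.
Proof. by rewrite /seq_length big_cons. Qed.

Lemma seq_length_cat E F : seq_length (E ++ F) = seq_length E + seq_length F.
Proof. by rewrite /seq_length big_cat. Qed.

Lemma seq_seg_dedup (E : seq (P * P)) : {in E, forall e, e.1 <> e.2} ->
  exists F : seq (P * P), [/\ {subset F <= E},
    pairwise (fun e e' => `[< seg e <> seg e' >]) F,
    forall w, odd (count (is_endpoint w) F) = odd (count (is_endpoint w) E) &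
    seq_length F <= seq_length E].
Proof.
elim: E => [_|e E IH nondeg]; first by exists [::].
have [|F [FE F_pw F_odd F_len]] := IH; first by move=> e' e'E; apply: nondeg; rewrite inE e'E orbT.
have subE : {subset F <= e :: E} by move=> e' /FE e'E; rewrite inE e'E orbT.
case: (pselect (exists2 e', e' \in F & seg e' = seg e)) => [[e' e'F se'e]|no_dup].
- have F_rem := perm_to_rem e'F.
  exists (rem e' F); split.
  + by move=> x /mem_rem /subE.
  + exact: subseq_pairwise (rem_subseq _ _) F_pw.
  + move=> w; rewrite /= oddD -F_odd (permP F_rem) /= oddD.
    rewrite (eq_seg_is_endpoint w (nondeg _ (subE _ e'F)) (nondeg _ (mem_head _ _)) se'e).
    by rewrite addKb.
  + have : seq_length F = edist e'.1 e'.2 + seq_length (rem e' F).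
      by rewrite /seq_length (perm_big _ F_rem) big_cons.
    move: F_len; rewrite seq_length_cons.
    by have := edist_ge0 e.1 e.2; have := edist_ge0 e'.1 e'.2; lra.
- exists (e :: F); split.
  + by move=> x; rewrite !inE => /orP[-> //|/FE ->]; rewrite orbT.
  + rewrite pairwise_cons F_pw andbT; apply/allP => x xF; apply/asboolP => sx.
    by apply: no_dup; exists x.
  + by move=> w; rewrite /= !oddD F_odd.
  + by rewrite !seq_length_cons lerD2l.
Qed.

Lemma is_endpointE (x y w : P) : x <> y -> is_endpoint w (x, y) = (x == w) (+) (y == w).
Proof.
move=> nxy; rewrite /is_endpoint /=; have [<-|//] := eqVneq x w.
by have [exy|] := eqVneq y x; first by case: nxy.
Qed.

Lemma connectsC {e : P * P} {x y} : connects e x y -> connects e y x.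
Proof. by case=> ->; [right | left]. Qed.

Lemma connects_seg {e : P * P} {x y} : connects e x y -> seg e = seg (x, y).
Proof. by case=> ->; rewrite // segC. Qed.

Lemma connects_edist {e : P * P} {x y} : connects e x y -> edist e.1 e.2 = edist x y.
Proof. by case=> ->; rewrite // edistC. Qed.

Lemma connects_is_endpoint {e : P * P} {x y} w : connects e x y -> x <> y ->
  is_endpoint w e = (x == w) (+) (y == w).
Proof.
case=> -> nxy; first exact: is_endpointE.
by rewrite is_endpointE; [exact: addbC | exact: nesym].
Qed.

Lemma connects_pair {e : P * P} {x y x' y'} : connects e x y -> connects e x' y' ->
  x = x' /\ y = y' \/ x = y' /\ y = x'.
Proof. by case=> -> [] [-> ->]; [left | right | right | left]. Qed.

Lemma is_endpoint_connects {w} {e : P * P} : is_endpoint w e -> exists o, connects e w o.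
Proof.
case: e => x y; rewrite /is_endpoint /= => /orP[/eqP ->|/eqP ->].
  by exists y; left.
by exists x; right.
Qed.

Lemma connects_seg_beg {e : P * P} {x y} : connects e x y -> seg e x.
Proof. by move/connects_seg ->; apply: seg_beg. Qed.

End SegmentLists.

Section Tangency.
Context {R : realType}.
Local Notation P := (R * R)%type.
Local Notation edist := (@Defs.edist R).
Local Notation seg := (@Defs.seg R).

Lemma derivable_slope_bounded {g : R -> R} {x} : derivable g x 1 ->
  exists2 M, 0 <= M & exists2 d, 0 < d &
    forall h, `|h| < d -> `|g (h + x) - g x| <= M * `|h|.
Proof.
move=> /cvg_ex[l /cvgrPdist_lt /(_ 1 ltr01)].
rewrite /nbhs /= /dnbhs /within /= => /nbhs_ballP[d d0 near_l].
exists (`|l| + 1); first by rewrite addr_ge0.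
exists d => // h hd; have [->|h_neq0] := eqVneq h 0.
  by rewrite add0r subrr normr0 mulr0.
have /near_l /(_ h_neq0) : ball 0 d h by rewrite /ball /= sub0r normrN.
rewrite /GRing.scale /= mulr1; set D := g (h + x) - g x => slope.
have -> : D = (h^-1 * D) * h by rewrite mulrC mulrA divff // mul1r.
rewrite normrM ler_wpM2r //.
have := ler_normD l (h^-1 * D - l); rewrite addrC subrK; move: slope; rewrite distrC; lra.
Qed.

(* [w1 ^+ 2 + w2 ^+ 2 < 2 * `|w1 * k1 + w2 * k2|] is the union of the open discs of
   radius |k| centred at k and -k, which touch at the origin. *)
Lemma graph_not_between_tangent_discs {g : R -> R} {r k1 k2 : R} :
  derivable g 0 1 -> 0 <= g 0 -> 0 < r -> 0 < k1 ^+ 2 + k2 ^+ 2 ->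
  ~ (forall w1 w2, w1 ^+ 2 + w2 ^+ 2 < r ^+ 2 ->
       w1 ^+ 2 + w2 ^+ 2 < 2 * `|w1 * k1 + w2 * k2| -> g w1 < w2).
Proof.
move=> g_der g0 r0 k_gt0 in_discs.
have k2_0 : k2 = 0.
  apply/eqP; apply: contraT => k2_neq0.
  set h := Num.min (r / 2) `|k2|.
  have h0 : 0 < h by rewrite lt_min normr_gt0 k2_neq0 divr_gt0.
  have [hr hk] : h <= r / 2 /\ h <= `|k2| by split; rewrite ge_min lexx ?orbT.
  suff : g 0 < - h by lra.
  apply: in_discs; rewrite expr0n sqrrN add0r expr2; first nra.
  have : h * h <= h * `|k2| by rewrite ler_wpM2l // ltW.
  by rewrite mul0r add0r normrM normrN (gtr0_norm h0); nra.
have k1_gt0 : 0 < `|k1|.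
  by rewrite normr_gt0; apply: contraTneq k_gt0 => ->; rewrite k2_0 expr0n addr0 ltxx.
have [M M0 [d d0 slope]] := derivable_slope_bounded g_der.
set rho := Num.min (Num.min (d / 2) (r / (2 * (1 + M)))) (`|k1| / (1 + M ^+ 2)).
have M1 : 0 < 1 + M by lra.
have M2 : 0 < 1 + M ^+ 2 by rewrite ltr_pwDl ?sqr_ge0.
have rho0 : 0 < rho by rewrite !lt_min !divr_gt0 ?mulr_gt0.
have [rho_d rho_r rho_k] :
    [/\ rho <= d / 2, rho * (1 + M) <= r / 2 & rho * (1 + M ^+ 2) <= `|k1|].
  rewrite -ler_pdivlMr // -ler_pdivlMr // -mulrA -invfM.
  by split; rewrite !ge_min lexx ?orbT.
(* The point (rho, y) is not above the graph, yet lies in a disc since g is Lipschitz at 0. *)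
set y := Num.min (g rho) 0.
have [y_le0 y_le_g] : y <= 0 /\ y <= g rho by split; rewrite ge_min lexx ?orbT.
have y_ge : - (M * rho) <= y.
  have rho_lt_d : `|rho| < d by rewrite gtr0_norm //; lra.
  have := slope rho rho_lt_d; rewrite addr0 (gtr0_norm rho0) ler_norml => /andP[lo _].
  by rewrite le_min; apply/andP; split; nra.
have y_sqr : y * y <= (M * rho) * (M * rho) by nra.
have : g rho < y.
  apply: in_discs.
  - have : (rho * (1 + M)) * (rho * (1 + M)) <= (r / 2) * (r / 2).
      by apply: ler_pM => //; rewrite mulr_ge0 ?ltW.
    rewrite !expr2; nra.
  - have : rho * (rho * (1 + M ^+ 2)) <= rho * `|k1| by rewrite ler_wpM2l // ltW.
    rewrite k2_0 mulr0 addr0 normrM (gtr0_norm rho0) !expr2; nra.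
lra.
Qed.

(* Inverse of the change of coordinates in [C1_domain]: the point with coordinates
   (w1, w2) relative to z. *)
Definition frame (z : P) (c s w1 w2 : R) : P :=
  (z.1 + (c * w1 - s * w2), z.2 + (s * w1 + c * w2)).

Lemma sqdist_frame z x c s w1 w2 : c ^+ 2 + s ^+ 2 = 1 ->
  sqdist (frame z c s w1 w2) x = sqdist z x + (w1 ^+ 2 + w2 ^+ 2) +
    2 * (w1 * (c * (z.1 - x.1) + s * (z.2 - x.2)) + w2 * (- s * (z.1 - x.1) + c * (z.2 - x.2))).
Proof.
move=> cs1; apply/eqP; rewrite -subr_eq0; apply/eqP.
transitivity ((c ^+ 2 + s ^+ 2 - 1) * (w1 ^+ 2 + w2 ^+ 2)); first by rewrite /sqdist /=; ring.
by rewrite cs1 subrr mul0r.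
Qed.

Lemma bdry_frame {O : set P} {z} : C1_domain O -> bdry O z ->
  exists r c s (g : R -> R), [/\ 0 < r, c ^+ 2 + s ^+ 2 = 1, derivable g 0 1, 0 <= g 0 &
    forall w1 w2, w1 ^+ 2 + w2 ^+ 2 < r ^+ 2 -> O (frame z c s w1 w2) <-> g w1 < w2].
Proof.
move=> [oO chart] bz; have [r [c [s [g [r0 [cs1 [[g_der _] graph]]]]]]] := chart z bz.
have unrotate (a b : R) : a = (c ^+ 2 + s ^+ 2) * b -> a = b by rewrite cs1 mul1r.
have in_O w1 w2 : w1 ^+ 2 + w2 ^+ 2 < r ^+ 2 -> O (frame z c s w1 w2) <-> g w1 < w2.
  move=> wr; have /graph : edist (frame z c s w1 w2) z < r.
    have : edist (frame z c s w1 w2) z ^+ 2 = w1 ^+ 2 + w2 ^+ 2.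
      by rewrite sqr_edist sqdist_frame // /sqdist !subrr; ring.
    by have := edist_ge0 (frame z c s w1 w2) z; nra.
  have -> : c * ((frame z c s w1 w2).1 - z.1) + s * ((frame z c s w1 w2).2 - z.2) = w1.
    by apply: unrotate; rewrite /frame /=; ring.
  have -> : - s * ((frame z c s w1 w2).1 - z.1) + c * ((frame z c s w1 w2).2 - z.2) = w2.
    by apply: unrotate; rewrite /frame /=; ring.
  by [].
exists r, c, s, g; split=> //.
rewrite leNgt; apply/negP => g_neg; apply: (open_bdry_notin oO bz).
have -> : z = frame z c s 0 0 by rewrite /frame !mulr0 subrr !addr0; case: (z).
by apply/in_O; rewrite // expr0n addr0 exprn_gt0.
Qed.

Lemma bdry_not_between_balls {O : set P} {u v z} : C1_domain O -> bdry O z ->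
  seg (u, v) z -> z <> u -> z <> v ->
  (forall w, edist w u < edist z u -> O w) ->
  (forall w, edist w v < edist z v -> O w) -> False.
Proof.
move=> O_C1 bz suv zu zv ball_u ball_v.
have [r [c [s [g [r0 cs1 g_der g0 in_O]]]]] := bdry_frame O_C1 bz.
have [t /andP[t0 t1] ez] := seg_inner suv zu zv.
set E1 := c * (v.1 - u.1) + s * (v.2 - u.2).
set E2 := - s * (v.1 - u.1) + c * (v.2 - u.2).
have in_ball x k : x <> z -> (forall w, edist w x < edist z x -> O w) ->
    z.1 - x.1 = k * (v.1 - u.1) -> z.2 - x.2 = k * (v.2 - u.2) ->
    forall w1 w2, w1 ^+ 2 + w2 ^+ 2 + 2 * k * (w1 * E1 + w2 * E2) < 0 ->
    O (frame z c s w1 w2).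
  move=> xz ball_x e1 e2 w1 w2 neg; apply: ball_x.
  rewrite /edist -/(sqdist (frame z c s w1 w2) x) -/(sqdist z x) ltr_sqrt.
    by rewrite sqdist_frame // e1 e2 -addrA gtrDl; move: neg; rewrite /E1 /E2; lra.
  by rewrite -sqr_edist exprn_gt0 // edist_gt0 // => /esym.
have E_gt0 : 0 < E1 ^+ 2 + E2 ^+ 2.
  have -> : E1 ^+ 2 + E2 ^+ 2 = sqdist u v.
    by rewrite -[RHS]mul1r -cs1 /E1 /E2 /sqdist; ring.
  by rewrite -sqr_edist -(seg_edistD suv) exprn_gt0 // addr_gt0 // ?edist_gt0 // => /esym.
(* In the frame the balls are discs tangent at 0 with centres -t E and (1 - t) E;
   they contain the discs of the same kind with centres -m E and m E. *)
set m := Num.min t (1 - t).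
have [m0 mt m1t] : [/\ 0 < m, m <= t & m <= 1 - t].
  by split; [rewrite lt_min t0 subr_gt0 t1 | rewrite ge_min lexx | rewrite ge_min lexx orbT].
have mE_gt0 : 0 < (m * E1) ^+ 2 + (m * E2) ^+ 2.
  by rewrite !exprMn -mulrDr mulr_gt0 ?exprn_gt0.
apply: (graph_not_between_tangent_discs g_der g0 r0 mE_gt0) => w1 w2 wr.
rewrite mulrCA [w2 * _]mulrCA -mulrDr normrM (gtr0_norm m0) => w_disc.
apply/(in_O w1 w2 wr); have [dot_le0|dot_gt0] := lerP (w1 * E1 + w2 * E2) 0.
- apply: (in_ball u t (nesym zu) ball_u); rewrite ?ez /lerp /=; try ring.
  have : t * (w1 * E1 + w2 * E2) <= m * (w1 * E1 + w2 * E2) by rewrite ler_wnM2r.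
  by move: w_disc; rewrite ler0_norm //; lra.
- apply: (in_ball v (t - 1) (nesym zv) ball_v); rewrite ?ez /lerp /=; try ring.
  have : m * (w1 * E1 + w2 * E2) <= (1 - t) * (w1 * E1 + w2 * E2) by rewrite ler_wpM2r // ltW.
  by move: w_disc; rewrite gtr0_norm //; lra.
Qed.

End Tangency.

Section MinimalConnection.
Context {R : realType}.
Local Notation P := (R * R)%type.
Local Notation edist := (@Defs.edist R).
Local Notation seg := (@Defs.seg R).

Context {O : set P} {p : nat} {a : 'I_p -> P} {q : nat} {L : 'I_q -> P * P}.
Hypothesis O_C1 : C1_domain O.
Hypothesis O_a : forall i, O (a i).
Hypothesis L_connection : is_connection O a L.
Hypothesis L_minimal : forall q' (L' : 'I_q' -> P * P),
  is_connection O a L' -> total_length L <= total_length L'.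

Let O_open : open O := proj1 O_C1.

Definition admissible (e : P * P) : Prop :=
  [/\ e.1 <> e.2, seg e `<=` closure O &
    (exists i k, i <> k /\ connects e (a i) (a k)) \/
    (exists i b, bdry O b /\ connects e (a i) b)].

Lemma L_admissible j : admissible (L j).
Proof. by case: L_connection => [nd [_ [cl [ends _]]]]; split. Qed.

(* Segments occurring twice cancel in pairs, leaving a connection. *)
Lemma minimal_le_seq_length E : {in E, forall e, admissible e} ->
  (forall i, odd (count (is_endpoint (a i)) E)) -> total_length L <= seq_length E.
Proof.
move=> E_adm E_odd.
have [|F [FE F_pw F_odd F_len]] := seq_seg_dedup E; first by move=> e /E_adm[].
apply: le_trans F_len; pose e0 : P * P := (0, 0, (0, 0)).
pose L' (j : 'I_(size F)) := nth e0 F j.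
have L'_adm j : admissible (L' j) by apply/E_adm/FE/mem_nth.
have -> : seq_length F = total_length L' by rewrite /seq_length (big_nth e0) big_mkord.
apply: L_minimal; split; [|split; [|split; [|split]]].
- by move=> j; case: (L'_adm j).
- move=> j k njk; wlog jk : j k njk / (j < k)%N.
    move=> wlog_jk; have [jk|kj|ejk] := ltngtP j k; first exact: wlog_jk.
      by move=> e; apply: (wlog_jk k j (nesym njk) kj); rewrite e.
    by case: njk; apply: val_inj.
  by move/pairwiseP: F_pw => /(_ e0 j k (ltn_ord j) (ltn_ord k) jk) /asboolP.
- by move=> j; case: (L'_adm j).
- by move=> j; case: (L'_adm j).
- move=> i; rewrite card_set_count.
  have -> : count (fun j => is_endpoint (a i) (L' j)) (index_enum 'I_(size F)) =
      count (is_endpoint (a i)) F by rewrite !count_sum [in RHS](big_nth e0) big_mkord.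
  by rewrite F_odd.
Qed.

Lemma minimal_le_replacement (J : seq 'I_q) N : uniq J ->
  {in N, forall e, admissible e} ->
  (forall i, odd (count (is_endpoint (a i)) N) = odd (count (is_endpoint (a i)) (map L J))) ->
  seq_length (map L J) <= seq_length N.
Proof.
move=> J_uniq N_adm N_odd; set K := [seq j <- index_enum 'I_q | j \notin J].
have split_sum (V : nmodType) (F : 'I_q -> V) :
    \sum_(j < q) F j = \sum_(j <- K) F j + \sum_(j <- J) F j.
  by rewrite (bigID (mem J)) /= addrC big_filter big_uniq.
have : total_length L <= seq_length (map L K ++ N).
  apply: minimal_le_seq_length.
    by move=> e; rewrite mem_cat => /orP[/mapP[j _ ->]|/N_adm //]; apply: L_admissible.
  move=> i; rewrite count_cat oddD N_odd -oddD -count_cat -map_cat count_map count_sum.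
  case: L_connection => [_ [_ [_ [_ /(_ i)]]]].
  by rewrite card_set_count count_sum (split_sum nat) big_cat.
by rewrite /total_length (split_sum R) seq_length_cat /seq_length !big_map lerD2l.
Qed.

Definition site (w : P) : Prop := exists i, w = a i.
Definition terminal (w : P) : Prop := site w \/ bdry O w.

Lemma site_in {w} : site w -> O w.
Proof. by case=> i ->. Qed.

Lemma bdry_notin {w} : bdry O w -> ~ O w.
Proof. exact: open_bdry_notin. Qed.

Lemma bdry_neq_a {w} i : bdry O w -> (w == a i) = false.
Proof. by move=> bw; apply/eqP => ew; apply: (bdry_notin bw); rewrite ew. Qed.

Lemma bdry_not_site {w} : bdry O w -> ~ site w.
Proof. by move=> bw /site_in; apply: bdry_notin. Qed.

Lemma admissible_to_bdry x c : site x -> bdry O c -> seg (x, c) `<=` closure O ->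
  admissible (x, c).
Proof.
move=> [i ->] bc sc; split=> //=; last by right; exists i, c; split=> //; left.
by move=> e; apply: (bdry_notin bc); rewrite -e.
Qed.

Lemma is_endpoint_to_bdry x c i : bdry O c -> is_endpoint (a i) (x, c) = (x == a i).
Proof. by move=> bc; rewrite /is_endpoint /= (bdry_neq_a i bc) orbF. Qed.

Definition shortcut (x y : P) (C : seq (P * P)) : Prop :=
  [/\ {in C, forall e, admissible e},
      forall i, odd (count (is_endpoint (a i)) C) = (x == a i) (+) (y == a i) &
      seq_length C <= edist x y].

(* If [x, y] leaves the closure of O, go instead from x, and from y if it is a site,
   straight to the first boundary point on the way. *)
Lemma site_shortcut {x y} : site x -> terminal y -> exists C, shortcut x y C.
Proof.
move=> sx ty; have [<-|nxy] := eqVneq x y.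
  by exists [::]; split=> // [i|]; rewrite ?addbb // /seq_length big_nil edist_ge0.
case: (pselect (seg (x, y) `<=` closure O)) => [sc|nsc].
  exists [:: (x, y)]; split; last by rewrite seq_length1.
    move=> e; rewrite inE => /eqP ->; split=> //=; first exact/eqP.
    have [i ex] := sx; rewrite ex; case: ty => [[k ey]|bdy].
      left; exists i, k; split; last by left; rewrite ey.
      by move=> eik; move: nxy; rewrite ex ey eik eqxx.
    by right; exists i, y; split=> //; left.
  by move=> i; rewrite /= addn0 oddb is_endpointE //; apply/eqP.
have [w0 sw0 nw0] : exists2 w0, seg (x, y) w0 & ~ closure O w0.
  by apply: contrapT => H; apply: nsc => w sw; apply: contrapT => nw; apply: H; exists w.
have nOw0 : ~ O w0 by move=> Ow; apply/nw0/subset_closure.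
have [c [bc sc cl_c]] := seg_exit O_open (site_in sx) nOw0.
have xc := seg_edist_le sc; have xy := seg_edistD sw0.
case: ty => [sy|bdy].
- have [d [bd sd cl_d]] := seg_exit O_open (site_in sy) nOw0.
  have yd := seg_edist_le sd.
  exists [:: (x, c); (y, d)]; split.
  + by move=> e; rewrite !inE => /orP[] /eqP ->; apply: admissible_to_bdry.
  + by move=> i; rewrite /= !is_endpoint_to_bdry // addn0 oddD !oddb.
  + rewrite seq_length_cons seq_length1 -xy (edistC w0 y); lra.
- exists [:: (x, c)]; split.
  + by move=> e; rewrite inE => /eqP ->; apply: admissible_to_bdry.
  + by move=> i; rewrite /= is_endpoint_to_bdry // addn0 oddb (bdry_neq_a i bdy) addbF.
  + by rewrite seq_length1 -xy; have := edist_ge0 w0 y; lra.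
Qed.

Lemma terminal_shortcut {x y} : terminal x -> terminal y -> exists C, shortcut x y C.
Proof.
move=> [sx|bx] ty; first exact: site_shortcut.
case: ty => [sy|bdy]; last first.
  by exists [::]; split=> // [i|]; rewrite ?(bdry_neq_a i bx) ?(bdry_neq_a i bdy) //
    /seq_length big_nil edist_ge0.
have [C [C_adm C_odd C_len]] := site_shortcut sy (or_intror bx).
by exists C; split=> // [i|]; rewrite ?C_odd 1?addbC // edistC.
Qed.

Lemma connects_L j : connects (L j) (L j).1 (L j).2.
Proof. by left; case: (L j). Qed.

Lemma connects_L_terminal {j x y} : connects (L j) x y ->
  [/\ terminal x, terminal y & site x \/ site y].
Proof.
move=> cxy; case: (L_admissible j) => _ _ [[i [k [_ cik]]] | [i [b [bb cib]]]].
  have sa l : terminal (a l) by left; exists l.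
  by have [[-> ->]|[-> ->]] := connects_pair cxy cik; (split; [exact: sa|exact: sa|left; eexists]).
have si : site (a i) by exists i.
by have [[-> ->]|[-> ->]] := connects_pair cxy cib;
  [split; [left | right | left] | split; [right | left | right]].
Qed.

Lemma connects_L_neq {j x y} : connects (L j) x y -> x <> y.
Proof. by have [nd _ _] := L_admissible j; case=> eL; rewrite eL in nd => // /esym. Qed.

Lemma connects_L_uniq {j z o o'} : connects (L j) z o -> connects (L j) z o' -> o = o'.
Proof.
move=> czo czo'; have := connects_L_neq czo.
by case: czo czo' => -> [] [] // -> ->.
Qed.

Lemma minimal_exchange {j k x1 y1 x2 y2} : j <> k ->
  connects (L j) x1 y1 -> connects (L k) x2 y2 ->
  edist x1 y1 + edist x2 y2 <= edist x1 x2 + edist y1 y2.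
Proof.
move=> njk c1 c2.
have [tx1 ty1 _] := connects_L_terminal c1; have [tx2 ty2 _] := connects_L_terminal c2.
have [C [C_adm C_odd C_len]] := terminal_shortcut tx1 tx2.
have [D [D_adm D_odd D_len]] := terminal_shortcut ty1 ty2.
have := @minimal_le_replacement [:: j; k] (C ++ D).
rewrite /= seq_length_cons seq_length1 (connects_edist c1) (connects_edist c2) => le_CD.
apply: le_trans (le_CD _ _ _) _.
- by rewrite inE andbT; apply/eqP.
- by move=> e; rewrite mem_cat => /orP[/C_adm|/D_adm].
- move=> i; rewrite count_cat oddD C_odd D_odd /= addn0 oddD !oddb.
  rewrite (connects_is_endpoint _ c1 (connects_L_neq c1)).
  rewrite (connects_is_endpoint _ c2 (connects_L_neq c2)).
  by case: (x1 == a i); case: (y1 == a i); case: (x2 == a i); case: (y2 == a i).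
- by rewrite seq_length_cat lerD.
Qed.

Lemma common_point_cross_segs {j k x1 y1 x2 y2 z} : j <> k ->
  connects (L j) x1 y1 -> connects (L k) x2 y2 -> seg (L j) z -> seg (L k) z ->
  seg (x1, x2) z /\ seg (y1, y2) z.
Proof.
move=> njk c1 c2; rewrite (connects_seg c1) (connects_seg c2) => /seg_edistD d1 /seg_edistD d2.
have := minimal_exchange njk c1 c2; rewrite -d1 -d2.
have := edist_triangle x1 x2 z; have := edist_triangle y1 y2 z.
rewrite (edistC z y1) (edistC x2 z) => t1 t2 ex.
by split; apply: edist_triangle_eq; lra.
Qed.

Lemma common_point_endpoint {j k x y z} : j <> k -> connects (L j) x y ->
  seg (L j) z -> seg (L k) z -> z = x \/ z = y.
Proof.
move=> njk cxy sj sk; apply: contrapT => /not_orP[zx zy].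
have c2 := connects_L k; have n2 := connects_L_neq c2.
have [s1 s2] := common_point_cross_segs njk cxy c2 sj sk.
have [s3 s4] := common_point_cross_segs njk cxy (connectsC c2) sj sk.
have sxy : seg (x, y) z by rewrite -(connects_seg cxy).
by apply: n2; rewrite (seg_inner_apex sxy zx zy s1 s4) (seg_inner_apex sxy zx zy s3 s2).
Qed.

Lemma minimal_le_one {j x y} N : connects (L j) x y -> {in N, forall e, admissible e} ->
  (forall i, odd (count (is_endpoint (a i)) N) = (x == a i) (+) (y == a i)) ->
  edist x y <= seq_length N.
Proof.
move=> cxy N_adm N_odd; rewrite -(connects_edist cxy) -seq_length1.
apply: (@minimal_le_replacement [:: j]) => // i.
by rewrite N_odd /= addn0 oddb (connects_is_endpoint _ cxy (connects_L_neq cxy)).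
Qed.

(* Otherwise the first boundary point c from x towards w is closer to x than z is,
   and [x, c] followed by a shortcut from z to y would beat [x, y]. *)
Lemma site_ball_in_domain {j x y z} : connects (L j) x y -> site x ->
  seg (x, y) z -> bdry O z -> forall w, edist w x < edist z x -> O w.
Proof.
move=> cxy sx sz bz w wx; apply: contrapT => nOw.
have [c [bc sc cl_c]] := seg_exit O_open (site_in sx) nOw.
have [_ ty _] := connects_L_terminal cxy.
have [C [C_adm C_odd C_len]] := terminal_shortcut (or_intror bz) ty.
have : edist x y <= seq_length ((x, c) :: C).
  apply: (minimal_le_one _ cxy).
    by move=> e; rewrite inE => /orP[/eqP ->|/C_adm //]; apply: admissible_to_bdry.
  by move=> i; rewrite /= oddD is_endpoint_to_bdry // oddb C_odd (bdry_neq_a i bz).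
rewrite seq_length_cons -(seg_edistD sz); have := seg_edist_le sc.
by move: wx; rewrite (edistC w x) (edistC z x); lra.
Qed.

Lemma common_point_ends {j k z} : j <> k -> seg (L j) z -> seg (L k) z ->
  exists o1 o2, [/\ connects (L j) z o1, connects (L k) z o2 & seg (o1, o2) z].
Proof.
move=> njk sj sk.
have meet_end l m : l <> m -> seg (L l) z -> seg (L m) z -> exists o, connects (L l) z o.
  move=> nlm sl sm; have := common_point_endpoint nlm (connects_L l) sl sm.
  by case=> ->; [exists (L l).2; apply: connects_L | exists (L l).1; apply/connectsC/connects_L].
have [u1 c1] := meet_end j k njk sj sk; have [u2 c2] := meet_end k j (nesym njk) sk sj.
by exists u1, u2; split=> //; case: (common_point_cross_segs njk c1 c2 sj sk).
Qed.

Lemma site_third_segment i j k : j <> k ->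
  is_endpoint (a i) (L j) -> is_endpoint (a i) (L k) ->
  exists m, [/\ m <> j, m <> k & is_endpoint (a i) (L m)].
Proof.
move=> njk ej ek; apply: contrapT => no_third.
case: L_connection => [_ [_ [_ [_ /(_ i)]]]].
rewrite card_set_count count_sum (bigD1 j) //= (bigD1 k) /=; last exact/eqP/nesym.
rewrite big1 ?ej ?ek // => l /andP[lk lj].
case el : (is_endpoint (a i) (L l)) => //.
by case: no_third; exists l; split=> //; apply/eqP.
Qed.

Lemma minimal_segs_disjoint j k : j <> k -> seg (L j) `&` seg (L k) = set0.
Proof.
move=> njk; apply/seteqP; split=> // z [sj sk].
have [y1 [y2 [c1 c2 s12]]] := common_point_ends njk sj sk.
have zy1 := connects_L_neq c1; have zy2 := connects_L_neq c2.
have [[[i ez] | bz] _ sz_or_y1] := connects_L_terminal c1.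
- have [m [mj mk em]] : exists m, [/\ m <> j, m <> k & is_endpoint (a i) (L m)].
    by apply: site_third_segment; rewrite // -ez /is_endpoint;
      [case: c1 | case: c2] => ->; rewrite eqxx ?orbT.
  rewrite -ez in em; have [y3 c3] := is_endpoint_connects em.
  have sm := connects_seg_beg c3.
  have [y1' [y3' [c1' c3' s13]]] := common_point_ends (nesym mj) sj sm.
  have [y2' [y3'' [c2' c3'' s23]]] := common_point_ends (nesym mk) sk sm.
  rewrite -(connects_L_uniq c1 c1') -(connects_L_uniq c3 c3') in s13.
  rewrite -(connects_L_uniq c2 c2') -(connects_L_uniq c3 c3'') in s23.
  by apply: (connects_L_neq c3); rewrite (seg_inner_apex s12 zy1 zy2 s13 s23).
- have [_ _ [/(bdry_not_site bz) // | s1]] := connects_L_terminal c1.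
  have [_ _ [/(bdry_not_site bz) // | s2]] := connects_L_terminal c2.
  have ball1 := site_ball_in_domain (connectsC c1) s1 (seg_end y1 z) bz.
  have ball2 := site_ball_in_domain (connectsC c2) s2 (seg_end y2 z) bz.
  exact: (bdry_not_between_balls O_C1 bz s12 zy1 zy2 ball1 ball2).
Qed.

Lemma minimal_site_unique_segment i : exists j, is_endpoint (a i) (L j) /\
  forall k, is_endpoint (a i) (L k) -> k = j.
Proof.
have [j ej] : exists j, is_endpoint (a i) (L j).
  apply: contrapT => none; case: L_connection => [_ [_ [_ [_ /(_ i)]]]].
  rewrite card_set_count (@eq_count _ _ pred0) ?count_pred0 // => j /=.
  by apply/negP => ej; apply: none; exists j.
exists j; split=> // k ek; apply: contrapT => nkj.
have [y cj] := is_endpoint_connects ej; have [y' ck] := is_endpoint_connects ek.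
have := minimal_segs_disjoint _ _ nkj; rewrite -subset0 => /(_ (a i)); apply.
by split; apply: connects_seg_beg; [exact: ck | exact: cj].
Qed.

Lemma bdry_on_L_endpoint {j z} : seg (L j) z -> bdry O z -> z = (L j).1 \/ z = (L j).2.
Proof.
move=> sz bz; apply: contrapT => /not_orP[z1 z2].
have [x [y [cxy sx [zx zy]]]] :
    exists x y, [/\ connects (L j) x y, site x & z <> x /\ z <> y].
  have [_ _ [s1|s2]] := connects_L_terminal (connects_L j).
    by exists (L j).1, (L j).2; split=> //; apply: connects_L.
  by exists (L j).2, (L j).1; split=> //; apply/connectsC/connects_L.
move: sz; rewrite (connects_seg cxy) => sz.
have [_ [sy|by_] _] := connects_L_terminal cxy.
- have ball_x := site_ball_in_domain cxy sx sz bz.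
  have syx : seg (y, x) z by rewrite -segC.
  have ball_y := site_ball_in_domain (connectsC cxy) sy syx bz.
  exact: (bdry_not_between_balls O_C1 bz sz zx zy ball_x ball_y).
- have [C [C_adm C_odd C_len]] := site_shortcut sx (or_intror bz).
  have : edist x y <= seq_length C.
    apply: (minimal_le_one _ cxy) => // i.
    by rewrite C_odd (bdry_neq_a i bz) (bdry_neq_a i by_).
  rewrite -(seg_edistD sz); have := edist_gt0 zy; lra.
Qed.

Lemma minimal_seg_bdry j :
  seg (L j) `&` bdry O = set0 \/ seg (L j) `&` bdry O = [set (L j).1] \/
  seg (L j) `&` bdry O = [set (L j).2].
Proof.
have [_ _ site12] := connects_L_terminal (connects_L j).
have [sL1 sL2] : seg (L j) (L j).1 /\ seg (L j) (L j).2.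
  by rewrite (connects_seg (connects_L j)); split; [apply: seg_beg | apply: seg_end].
have [b1|nb1] := pselect (bdry O (L j).1).
  right; left; apply/seteqP; split=> [z [sz bz]|z ->] //.
  case: (bdry_on_L_endpoint sz bz) => // ez.
  by exfalso; case: site12; [exact: (bdry_not_site b1) | rewrite -ez; exact: (bdry_not_site bz)].
have [b2|nb2] := pselect (bdry O (L j).2).
  right; right; apply/seteqP; split=> [z [sz bz]|z ->] //.
  by case: (bdry_on_L_endpoint sz bz) => // ez; case: nb1; rewrite -ez.
left; apply/seteqP; split=> // z [sz bz].
by case: (bdry_on_L_endpoint sz bz) => ez; [apply: nb1 | apply: nb2]; rewrite -ez.
Qed.

End MinimalConnection.

Theorem lemma1p6 (R : realType) (O : set (R * R)) (p : nat) (a : 'I_p -> R * R)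
  (q : nat) (L : 'I_q -> (R * R) * (R * R)) :
  bounded_plane O -> simply_connected O -> C1_domain O ->
  injective a -> (forall i, O (a i)) ->
  is_minimal_connection O a L ->
  (forall j k : 'I_q, j <> k -> seg (L j) `&` seg (L k) = set0) /\
  (forall i : 'I_p, O (a i) ->
     exists j : 'I_q, is_endpoint (a i) (L j) /\
       forall k : 'I_q, is_endpoint (a i) (L k) -> k = j) /\
  (forall j : 'I_q,
     seg (L j) `&` bdry O = set0 \/
     seg (L j) `&` bdry O = [set (L j).1] \/
     seg (L j) `&` bdry O = [set (L j).2]).
Proof.
move=> _ _ O_C1 _ O_a [L_conn L_min].
split; first exact: (minimal_segs_disjoint O_C1 O_a L_conn L_min).
split; first by move=> i _; apply: (minimal_site_unique_segment O_C1 O_a L_conn L_min).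
exact: (minimal_seg_bdry O_C1 O_a L_conn L_min).
Qed.
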